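(* If $f$ is a VCCR (over linear profiles) satisfying Coherent Defeat and Positive Involvement in Defeat, then $f$ refines the Split Cycle VCCR: $f(\mathbf P)\supseteq sc(\mathbf P)$ for every profile $\mathbf P$.
   Context: Profiles: functions $\mathbf P:V\to\mathcal L(X)$, where $V$ is a nonempty finite set of voters, $X$ a nonempty finite set of candidates (drawn from fixed infinite sets), and $\mathcal L(X)$ the strict linear orders on $X$; voter $i$ ranks $x$ above $y$ if $(x,y)\in\mathbf P(i)$. $\mathrm{Margin}_{\mathbf P}(x,y)$ = number of voters ranking $x$ above $y$ minus number ranking $y$ above $x$. A majority path from $x_1$ to $x_n$ is $(x_1,\dots,x_n)$ with $\mathrm{Margin}_{\mathbf P}(x_i,x_{i+1})>0$ for all $i<n$; its strength is the minimum of these margins. A VCCR assigns to each profile an asymmetric relation $f(\mathbf P)$ on the candidates. Split Cycle: $(x,y)\in sc(\mathbf P)$ iff $\mathrm{Margin}_{\mathbf P}(x,y)>0$ and it exceeds the strength of every majority path from $y$ to $x$. Coherent Defeat: if $\mathrm{Margin}_{\mathbf P}(x,y)>0$ and there is no majority path from $y$ to $x$, then $(x,y)\in f(\mathbf P)$. Positive Involvement in Defeat: if $(x,y)\notin f(\mathbf P)$ and $\mathbf P'$ is obtained by adding one new voter whose ballot ranks $y$ above $x$, then $(x,y)\notin f(\mathbf P')$. *)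

From mathcomp Require Import all_boot all_order all_algebra.
Set Implicit Arguments. Unset Strict Implicit. Unset Printing Implicit Defensive.
Import Order.TTheory GRing.Theory Num.Theory.
Local Open Scope ring_scope.

Definition strict_linear_on (X : seq nat) (r : rel nat) : Prop :=
  [/\ forall a b, r a b -> (a \in X) && (b \in X),
      forall a, ~~ r a a,
      forall a b c, r a b -> r b c -> r a c &
      forall a b, a \in X -> b \in X -> a != b -> r a b || r b a].

(* A profile: a nonempty finite set of voters V, a nonempty finite set of
   candidates X, and for each voter i in V a strict linear order
   ballot i on X ("ballot i x y" = voter i ranks x above y). *)
Record Profile := MkProfile {
  voters : seq nat;
  cands : seq nat;
  ballot : nat -> rel nat;
  voters_uniq : uniq voters;
  cands_uniq : uniq cands;
  voters_nonempty : voters != [::];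
  cands_nonempty : cands != [::];
  ballot_lin : forall i, i \in voters -> strict_linear_on cands (ballot i)
}.

Definition Margin (P : Profile) (x y : nat) : int :=
  (count (fun i => ballot P i x y) (voters P))%:Z
  - (count (fun i => ballot P i y x) (voters P))%:Z.

(* A majority path (x, s_1, ..., s_k) from x to z, k >= 1, with s_k = z:
   all candidates, and each consecutive margin is positive. *)
Definition majority_path (P : Profile) (x : nat) (s : seq nat) (z : nat) : Prop :=
  [/\ s != [::], last x s = z, all (fun c => c \in cands P) (x :: s)
    & path (fun u v => 0 < Margin P u v) x s].

Definition strength (P : Profile) (x : nat) (s : seq nat) : int :=
  match pairmap (Margin P) x s with
  | [::] => 0
  | m :: ms => foldr Order.min m ms
  end.

Definition sc (P : Profile) (x y : nat) : Prop :=
  0 < Margin P x y /\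
  forall s, majority_path P y s x -> strength P y s < Margin P x y.

Definition is_VCCR (f : Profile -> rel nat) : Prop :=
  forall P x y, f P x y -> [/\ x \in cands P, y \in cands P & ~~ f P y x].

Definition coherent_defeat (f : Profile -> rel nat) : Prop :=
  forall P x y, 0 < Margin P x y ->
    ~ (exists s, majority_path P y s x) -> f P x y.

Definition adds_voter (P P' : Profile) (i a b : nat) : Prop :=
  [/\ i \notin voters P,
      perm_eq (voters P') (i :: voters P),
      cands P' = cands P,
      (forall j, j \in voters P -> ballot P' j =2 ballot P j) &
      ballot P' i a b].

Definition positive_involvement_in_defeat (f : Profile -> rel nat) : Prop :=
  forall P P' x y i, ~~ f P x y -> adds_voter P P' i y x -> ~~ f P' x y.

From mathcomp Require Import all_boot all_order all_algebra zify.
From Stdlib Require Import ClassicalEpsilon.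
Set Implicit Arguments. Unset Strict Implicit. Unset Printing Implicit Defensive.
Import Order.TTheory GRing.Theory Num.Theory.
Local Open Scope ring_scope.

(* Let m := Margin x y > 0 and suppose x does not defeat y although every
   majority path from y to x has strength < m.  The candidates reachable from y
   along edges of margin >= m form a set A containing y but not x, and every
   edge leaving A has margin < m.  Add m - 1 voters ranking every candidate
   outside A above every candidate of A, except that y is put just above x.
   By Positive Involvement x still does not defeat y; yet now Margin x y = 1
   while no edge leaving A has positive margin, so there is no majority path
   from y to x and Coherent Defeat makes x defeat y. *)

Definition ballot_of_seq (L : seq nat) : rel nat :=
  fun a b => [&& a \in L, b \in L & (index a L < index b L)%N].

Lemma ballot_of_seq_linear X L :
  uniq L -> L =i X -> strict_linear_on X (ballot_of_seq L).
Proof.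
move=> uL eLX; split.
- by move=> a b /and3P[aL bL _]; rewrite -!eLX aL bL.
- by move=> a; rewrite /ballot_of_seq ltnn !andbF.
- move=> a b c /and3P[aL _ ab] /and3P[_ cL bc].
  by rewrite /ballot_of_seq aL cL (ltn_trans ab bc).
- move=> a b; rewrite -!eLX /ballot_of_seq => aL bL nab; rewrite aL bL /=.
  case: ltngtP => // /(congr1 (nth 0 L)).
  by rewrite !nth_index // => eab; rewrite eab eqxx in nab.
Qed.

Lemma ballot_of_seq_cat s1 s2 a b :
  a \in s1 -> b \in s2 -> b \notin s1 -> ballot_of_seq (s1 ++ s2) a b.
Proof.
move=> as1 bs2 bs1; rewrite /ballot_of_seq !mem_cat as1 bs2 orbT !index_cat as1.
by rewrite (negbTE bs1) (leq_trans _ (leq_addr _ _)) // index_mem.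
Qed.

Lemma strict_linear_asym X r a b : strict_linear_on X r -> r a b -> ~~ r b a.
Proof.
by case=> _ irr trans _ rab; apply/negP => /(trans _ _ _ rab); apply/negP.
Qed.

Section SplitRanking.

Variables (X : seq nat) (A : pred nat) (x y : nat).
Hypotheses (Ay : A y) (nAx : ~~ A x).

Definition split_ranking : seq nat :=
  [seq c <- X | ~~ A c & c != x] ++ y :: x :: [seq c <- X | A c & c != y].

Lemma split_ranking_neq : x != y.
Proof. by apply: contraNneq nAx => ->. Qed.

Lemma split_ranking_linear :
  uniq X -> x \in X -> y \in X -> strict_linear_on X (ballot_of_seq split_ranking).
Proof.
move=> uX xX yX; apply: ballot_of_seq_linear => [|c].
  have yx : (y == x) = false by rewrite eq_sym (negbTE split_ranking_neq).
  rewrite cat_uniq /= !filter_uniq // !in_cons !mem_filter Ay (negbTE nAx) /=.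
  rewrite !eqxx yx /= !andbT; apply/hasPn => c.
  by rewrite !mem_filter => /andP[/andP[-> _] _].
rewrite mem_cat !in_cons !mem_filter.
case: (c =P x) => [->|_]; first by rewrite xX !orbT.
case: (c =P y) => [->|_]; first by rewrite yX !orbT.
by case: (A c); rewrite /= ?orbF.
Qed.

Lemma split_ranking_yx : ballot_of_seq split_ranking y x.
Proof.
rewrite /split_ranking -cat1s catA ballot_of_seq_cat ?mem_head //.
  by rewrite mem_cat mem_seq1 eqxx orbT.
by rewrite mem_cat mem_seq1 negb_or split_ranking_neq mem_filter eqxx andbF.
Qed.

Lemma split_ranking_outside_above u v : u \in X -> v \in X -> A u -> ~~ A v ->
  ~~ ((u == y) && (v == x)) -> ballot_of_seq split_ranking v u.
Proof.
move=> uX vX Au nAv not_yx; have nuB : u \notin [seq c <- X | ~~ A c & c != x].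
  by rewrite mem_filter Au.
have [vx|nvx] := eqVneq v x; last first.
  apply: ballot_of_seq_cat nuB; first by rewrite mem_filter nAv nvx.
  by rewrite !in_cons mem_filter Au uX /=; case: (u == y); rewrite ?orbT.
rewrite vx eqxx andbT in not_yx *.
rewrite /split_ranking -[y :: _]cat1s -[x :: _]cat1s !catA ballot_of_seq_cat //.
- by rewrite mem_cat mem_seq1 eqxx orbT.
- by rewrite mem_filter Au uX not_yx.
- rewrite !mem_cat !mem_seq1 (negbTE nuB) (negbTE not_yx) /=.
  by apply: contraNneq nAx => <-.
Qed.

End SplitRanking.

Definition ballot_margin (r : rel nat) (a b : nat) : int :=
  (r a b)%:Z - (r b a)%:Z.

Lemma ballot_margin_below X r a b :
  strict_linear_on X r -> r b a -> ballot_margin r a b = -1.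
Proof.
by move=> hr rba; rewrite /ballot_margin rba (negbTE (strict_linear_asym hr rba)).
Qed.

Lemma Margin_anti P x y : Margin P y x = - Margin P x y.
Proof. by rewrite /Margin opprB. Qed.

Lemma Margin_pos_cands P x y :
  0 < Margin P x y -> (x \in cands P) && (y \in cands P).
Proof.
rewrite /Margin subr_gt0 ltz_nat => /(leq_ltn_trans (leq0n _)).
by rewrite -has_count => /hasP[i iV]; case: (ballot_lin iV) => + _ _ _; apply.
Qed.

Section AddVoter.

Variables (P : Profile) (r : rel nat).
Hypothesis hr : strict_linear_on (cands P) r.

Definition fresh_voter : nat := (\max_(i <- voters P) i).+1.

Lemma fresh_voter_notin : fresh_voter \notin voters P.
Proof.
by apply/negP => /(@leq_bigmax_seq _ _ xpredT id) /(_ isT); rewrite ltnn.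
Qed.

Definition add_voter_ballot (i : nat) : rel nat :=
  if i == fresh_voter then r else ballot P i.

Lemma add_voter_uniq : uniq (fresh_voter :: voters P).
Proof. by rewrite /= fresh_voter_notin voters_uniq. Qed.

Lemma add_voter_linear i :
  i \in fresh_voter :: voters P -> strict_linear_on (cands P) (add_voter_ballot i).
Proof.
by rewrite in_cons /add_voter_ballot; case: eqP => // _ /ballot_lin.
Qed.

Definition add_voter : Profile :=
  MkProfile add_voter_uniq (cands_uniq P) isT (cands_nonempty P) add_voter_linear.

Lemma add_voter_adds a b : r a b -> adds_voter P add_voter fresh_voter a b.
Proof.
move=> rab; split=> //=; first exact: fresh_voter_notin.
- move=> j jV; rewrite /add_voter_ballot ifN //.
  by apply: contraNneq fresh_voter_notin => <-.
- by rewrite /add_voter_ballot eqxx.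
Qed.

Lemma count_add_voter a b :
  count (fun i => ballot add_voter i a b) (voters add_voter) =
  (r a b + count (fun i => ballot P i a b) (voters P))%N.
Proof.
rewrite /= /add_voter_ballot eqxx; congr (_ + _)%N; apply: eq_in_count => j jV.
by rewrite ifN //; apply: contraNneq fresh_voter_notin => <-.
Qed.

Lemma Margin_add_voter a b :
  Margin add_voter a b = Margin P a b + ballot_margin r a b.
Proof. rewrite /Margin /ballot_margin !count_add_voter !PoszD; lia. Qed.

End AddVoter.

Lemma nondefeat_after_copies (f : Profile -> rel nat) P r x y n :
  positive_involvement_in_defeat f -> strict_linear_on (cands P) r -> r y x ->
  ~~ f P x y ->
  exists Q, [/\ cands Q = cands P, ~~ f Q x y &
    forall a b, Margin Q a b = Margin P a b + ballot_margin r a b *+ n].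
Proof.
move=> PI hr ryx nfP; elim: n => [|n [Q [QC nfQ MQ]]].
  by exists P; split=> // a b; rewrite addr0.
have hrQ : strict_linear_on (cands Q) r by rewrite QC.
exists (add_voter hrQ); split => //.
- exact: PI nfQ (add_voter_adds hrQ ryx).
- by move=> a b; rewrite Margin_add_voter MQ -addrA -mulrSr.
Qed.

Definition reach (e : rel nat) (y : nat) : pred nat := fun a =>
  if excluded_middle_informative (exists2 s, path e y s & last y s = a)
  then true else false.

Lemma reachP e y a :
  reflect (exists2 s, path e y s & last y s = a) (reach e y a).
Proof. by rewrite /reach; case: excluded_middle_informative; constructor. Qed.

Lemma reach_refl e y : reach e y y.
Proof. by apply/reachP; exists [::]. Qed.

Lemma reach_step e y a b : reach e y a -> e a b -> reach e y b.
Proof.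
move=> /reachP[s ps <-] eab; apply/reachP; exists (rcons s b).
  by rewrite rcons_path ps.
by rewrite last_rcons.
Qed.

Lemma strength_ge P (k : int) y s :
  s != [::] -> path (fun u v => k <= Margin P u v) y s -> k <= strength P y s.
Proof.
rewrite /strength; case: s => // z s _ /= /andP[kyz].
elim: s z (Margin P y z) kyz => //= w s IH z m km /andP[kzw ps].
by rewrite le_min kzw IH.
Qed.

Lemma Margin_pos_path_cands P y s :
  path (fun u v => 0 < Margin P u v) y s -> all (fun c => c \in cands P) s.
Proof.
by elim: s y => //= z s IH y /andP[/Margin_pos_cands/andP[_ ->] /IH].
Qed.

Lemma majority_path_closed P (A : pred nat) y s z :
  (forall u v, u \in cands P -> v \in cands P -> A u -> 0 < Margin P u v -> A v) ->
  A y -> majority_path P y s z -> A z.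
Proof.
move=> closedA Ay [_ <- cands_s ps]; elim: s y Ay cands_s ps => //= v s IH u Au.
case/and3P=> uC vC cands_s /andP[uv ps]; apply: IH ps; last by rewrite vC.
exact: closedA uv.
Qed.

Lemma sc_separating_set P x y : sc P x y ->
  exists A : pred nat, [/\ A y, ~~ A x &
    forall u v, A u -> ~~ A v -> Margin P u v < Margin P x y].
Proof.
case=> xy_pos sc_xy; set m := Margin P x y.
exists (reach (fun u v => m <= Margin P u v) y); split.
- exact: reach_refl.
- apply/reachP => -[s ps ls].
  have /andP[_ yC] := Margin_pos_cands xy_pos.
  have sne : s != [::].
    by case: s ls {ps} => //= yx; move: xy_pos; rewrite yx /Margin subrr.
  have mps : majority_path P y s x.
    have ps0 := sub_path (fun u v => lt_le_trans xy_pos) ps.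
    by split; rewrite //= yC (Margin_pos_path_cands ps0).
  by have := sc_xy s mps; rewrite ltNge strength_ge.
- move=> u v Au; rewrite ltNge; apply: contra; exact: reach_step.
Qed.

Theorem theorem4p5 (f : Profile -> rel nat) :
  is_VCCR f -> coherent_defeat f -> positive_involvement_in_defeat f ->
  forall P x y, sc P x y -> f P x y.
Proof.
move=> _ CD PI P x y sc_xy; apply/negPn/negP => nf.
have [A [Ay nAx cutA]] := sc_separating_set sc_xy.
have /andP[xC yC] := Margin_pos_cands sc_xy.1.
have [k Mxy] : exists k, Margin P x y = k.+1%:Z.
  by case: (Margin P x y) sc_xy.1 => [[|k]|] // _; exists k.
pose r := ballot_of_seq (split_ranking (cands P) A x y).
have hr : strict_linear_on (cands P) r :=
  split_ranking_linear Ay nAx (cands_uniq P) xC yC.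
have ryx : r y x := split_ranking_yx (cands P) Ay nAx.
have [Q [QC nfQ MQ]] := nondefeat_after_copies k PI hr ryx nf.
have MQxy : Margin Q x y = 1.
  by rewrite MQ Mxy (ballot_margin_below hr ryx) mulNrn; lia.
apply/(negP nfQ)/CD => [|[s mps]]; first by rewrite MQxy.
apply/(negP nAx)/(majority_path_closed _ Ay mps) => u v; rewrite QC => uC vC Au.
apply: contraTT => nAv; rewrite -leNgt.
have [/andP[/eqP-> /eqP->] | not_yx] := boolP ((u == y) && (v == x)).
  by rewrite Margin_anti MQxy.
have rvu := split_ranking_outside_above nAx uC vC Au nAv not_yx.
rewrite MQ (ballot_margin_below hr rvu) mulNrn.
by have := cutA u v Au nAv; rewrite Mxy; lia.
Qed.
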